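(* Let $\mathcal G\in\mathbb G^4_S$ have decomposition $\mathcal G=\mathcal G_{cpi}+\mathcal G_{cyclic}$, where $\mathcal G_{cpi}$ has edge weights $\omega_j+\omega_k$ and $\mathcal G_{cyclic}=u\,\mathbf b^4_{1,4,2,3}+v\,\mathbf b^4_{1,2,3,4}$, i.e. $\mathcal G_{cyclic}$ has weights $v$ on $\{V_1,V_2\},\{V_3,V_4\}$, $u-v$ on $\{V_2,V_3\},\{V_1,V_4\}$, and $-u$ on $\{V_1,V_3\},\{V_2,V_4\}$. Let $\omega=\min(\omega_1,\omega_2,\omega_3,\omega_4)$. Then $\mathcal G$ satisfies the triangle inequality ($d_{i,k}\le d_{i,j}+d_{j,k}$ for all distinct $i,j,k$) if and only if $\omega\ge-u$, $\omega\ge v$ and $\omega\ge u-v$. In particular, if some $\omega_j<0$ then $\mathcal G$ does not satisfy the triangle inequality.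
   Context: $\mathbb G^4_S$ is the space of complete undirected weighted graphs without loops on $V_1,\dots,V_4$ with edge weights $d_{i,j}=d_{j,i}$, identified with $\mathbb R^6$ with the standard inner product. $\mathcal G_{cpi}$ is the orthogonal projection onto the subspace of graphs with $d_{j,k}=\omega_j+\omega_k$ for some reals $\omega_j$, and $\mathcal G_{cyclic}=\mathcal G-\mathcal G_{cpi}$ lies in its orthogonal complement, which is spanned by $\mathbf b^4_{1,4,2,3}$ and $\mathbf b^4_{1,2,3,4}$; here $\mathbf b^4_{i,j,k,s}$ has $d_{i,j}=1,d_{j,k}=-1,d_{k,s}=1,d_{s,i}=-1$ and other entries 0. *)

(* Vertices V_1..V_4 are the ordinals 0..3 of 'I_4. *)
From mathcomp Require Import all_boot all_order all_algebra.
Set Implicit Arguments. Unset Strict Implicit. Unset Printing Implicit Defensive.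
Import Order.TTheory GRing.Theory Num.Theory.
Local Open Scope ring_scope.

(* A weighted complete graph on 4 vertices, given by its weight function
   d a b (only the values for a != b matter). *)
Definition graph4 (R : Type) := 'I_4 -> 'I_4 -> R.

Definition V (k : nat) : 'I_4 := inord k.-1.

Definition same_edge (a b x y : 'I_4) : bool :=
  ((a == x) && (b == y)) || ((a == y) && (b == x)).

Definition b4 (R : numDomainType) (i j k s : 'I_4) : graph4 R :=
  fun a b =>
    if same_edge a b i j then 1
    else if same_edge a b j k then -1
    else if same_edge a b k s then 1
    else if same_edge a b s i then -1
    else 0.

Definition cpi_graph (R : numDomainType) (omega : 'I_4 -> R) : graph4 R :=
  fun a b => omega a + omega b.

Definition triangle_ineq (R : numDomainType) (G : graph4 R) : Prop :=
  forall i j k : 'I_4, i != j -> j != k -> i != k ->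
    G i k <= G i j + G j k.

Definition min4 (R : realDomainType) (omega : 'I_4 -> R) : R :=
  Num.min (Num.min (omega (V 1)) (omega (V 2)))
          (Num.min (omega (V 3)) (omega (V 4))).

From mathcomp Require Import all_boot all_order all_algebra lra.
Set Implicit Arguments. Unset Strict Implicit. Unset Printing Implicit Defensive.
Import Order.TTheory GRing.Theory Num.Theory.
Local Open Scope ring_scope.

(* Writing d_{i,k} = omega_i + omega_k + c_{i,k} with c the cyclic part, the
   triangle inequality d_{i,k} <= d_{i,j} + d_{j,k} becomes
   2 c_{i,k} - (c_{i,j} + c_{j,k} + c_{i,k}) <= 2 omega_j.  The weights v,
   u - v, -u of c sit on the three perfect matchings of K_4, and every triangle
   has one edge in each matching, so c sums to 0 on triangles and the
   inequality reads c_{i,k} <= omega_j.  The three edges avoiding j again meet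
   each matching once, which gives the three bounds; adding them yields
   0 <= omega_j. *)

Lemma V_ord (k : nat) (lt_k : (k.-1 < 4)%N) : V k = Ordinal lt_k.
Proof. exact/val_inj/inordK. Qed.

Definition V_ordE :=
  (V_ord (k:=1) isT, V_ord (k:=2) isT, V_ord (k:=3) isT, V_ord (k:=4) isT).

Lemma ord4_ind_V (P : 'I_4 -> Prop) :
  P (V 1) -> P (V 2) -> P (V 3) -> P (V 4) -> forall j, P j.
Proof.
rewrite !V_ordE => P1 P2 P3 P4 [[|[|[|[|j]]]] lt_j] //.
all: by rewrite (bool_irrelevance lt_j isT).
Qed.

Lemma le_min4 (R : realDomainType) (omega : 'I_4 -> R) (x : R) :
  (x <= min4 omega) <-> (forall j, x <= omega j).
Proof.
rewrite /min4 !le_min; split=> [/andP[/andP[x1 x2] /andP[x3 x4]]|x_le].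
  exact: ord4_ind_V.
by rewrite !x_le.
Qed.

Lemma cpi_add_triangle_le (R : realDomainType) (wi wj wk cij cjk cik : R) :
  cij + cjk + cik = 0 ->
  (wi + wk + cik <= (wi + wj + cij) + (wj + wk + cjk)) = (cik <= wj).
Proof. by move=> sum0; apply/idP/idP; lra. Qed.

Lemma triangle_ineq_cpi_add (R : realDomainType) (omega : 'I_4 -> R)
    (c G : graph4 R) :
  (forall a b, a != b -> G a b = cpi_graph omega a b + c a b) ->
  (forall i j k, i != j -> j != k -> i != k -> c i j + c j k + c i k = 0) ->
  triangle_ineq G <->
  (forall i j k, i != j -> j != k -> i != k -> c i k <= omega j).
Proof.
move=> G_E c_sum0; split=> le_c i j k ij jk ik; last first.
  by rewrite !G_E // cpi_add_triangle_le ?le_c ?c_sum0.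
by move: (le_c i j k ij jk ik); rewrite !G_E // cpi_add_triangle_le ?c_sum0.
Qed.

Lemma cyclic_bounds_ge0 (R : realDomainType) (u v x : R) :
  [/\ - u <= x, v <= x & u - v <= x] -> 0 <= x.
Proof. by case=> *; lra. Qed.

Definition cyclic_graph {R : numDomainType} (u v : R) : graph4 R :=
  fun a b => u * b4 R (V 1) (V 4) (V 2) (V 3) a b
             + v * b4 R (V 1) (V 2) (V 3) (V 4) a b.

Section CyclicGraph.
Variables (R : realDomainType) (u v : R).

Lemma cyclic_graph_triangle_sum (i j k : 'I_4) :
  i != j -> j != k -> i != k ->
  cyclic_graph u v i j + cyclic_graph u v j k + cyclic_graph u v i k = 0.
Proof.
rewrite /cyclic_graph /b4 !V_ordE /same_edge.
case: i => [[|[|[|[|i]]]] ?] //; case: j => [[|[|[|[|j]]]] ?] //;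
  case: k => [[|[|[|[|k]]]] ?] //= _ _ _.
all: lra.
Qed.

Lemma cyclic_graph_le_avoiding (j : 'I_4) (x : R) :
  (forall i k, i != j -> k != j -> i != k -> cyclic_graph u v i k <= x) <->
  [/\ - u <= x, v <= x & u - v <= x].
Proof.
split=> [|[ux vx uvx] i k].
  elim/ord4_ind_V: j => le_x;
    [move: (le_x (V 2) (V 3)) (le_x (V 3) (V 4)) (le_x (V 2) (V 4))
    |move: (le_x (V 1) (V 3)) (le_x (V 3) (V 4)) (le_x (V 1) (V 4))
    |move: (le_x (V 1) (V 2)) (le_x (V 2) (V 4)) (le_x (V 1) (V 4))
    |move: (le_x (V 1) (V 2)) (le_x (V 2) (V 3)) (le_x (V 1) (V 3))];
    rewrite /cyclic_graph /b4 !V_ordE /same_edge /=;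
    by move=> /(_ isT isT isT) ? /(_ isT isT isT) ? /(_ isT isT isT) ?; split; lra.
rewrite /cyclic_graph /b4 !V_ordE /same_edge.
case: i => [[|[|[|[|i]]]] ?] //; case: j => [[|[|[|[|j]]]] ?] //;
  case: k => [[|[|[|[|k]]]] ?] //= _ _ _.
all: lra.
Qed.
Lemma triangle_ineq_cpi_cyclic (omega : 'I_4 -> R) (G : graph4 R) :
  (forall a b, a != b -> G a b = cpi_graph omega a b + cyclic_graph u v a b) ->
  triangle_ineq G <->
  (forall j, [/\ - u <= omega j, v <= omega j & u - v <= omega j]).
Proof.
move=> G_E; rewrite (triangle_ineq_cpi_add G_E cyclic_graph_triangle_sum).
split=> [le_c j | bounds i j k ij jk ik].
  apply/(cyclic_graph_le_avoiding j) => i k ij kj ik.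
  by apply: le_c; rewrite // eq_sym.
move: (bounds j) => /(cyclic_graph_le_avoiding j).
by apply=> //; rewrite eq_sym.
Qed.
End CyclicGraph.

Theorem theorem17 (R : realFieldType) (G : graph4 R) (omega : 'I_4 -> R)
    (u v : R)
    (hG : forall a b : 'I_4, a != b ->
       G a b = cpi_graph omega a b
               + u * b4 R (V 1) (V 4) (V 2) (V 3) a b
               + v * b4 R (V 1) (V 2) (V 3) (V 4) a b) :
  (triangle_ineq G <->
     [/\ - u <= min4 omega, v <= min4 omega & u - v <= min4 omega])
  /\ ((exists j : 'I_4, omega j < 0) -> ~ triangle_ineq G).
Proof.
have triangle_iff : triangle_ineq G <->
    forall j, [/\ - u <= omega j, v <= omega j & u - v <= omega j].
  by apply: triangle_ineq_cpi_cyclic => a b ab; rewrite hG // addrA.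
split.
  rewrite triangle_iff.
  split=> [bounds | [/le_min4 ux /le_min4 vx /le_min4 uvx] j]; last by split.
  by split; apply/le_min4 => j; case: (bounds j).
move=> [j omega_lt0] /triangle_iff /(_ j) /cyclic_bounds_ge0.
by rewrite leNgt omega_lt0.
Qed.
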